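(* Let $\tilde{\mathbf{M}}$ be a real $n\times n$ skew-symmetric matrix and let $\mathbf{L}$ be a symmetric $n\times n$ matrix with entries in $\{0,1\}$ and all diagonal entries equal to $1$. Let $\tilde{\mathbf{M}}_{\mathbf{L}}=\mathbf{L}\circ\tilde{\mathbf{M}}$, let $\mathbf{D}_{\beta}=\mathbf{I}\circ(\mathbf{L}\mathbf{L}^\top)$ (the diagonal matrix whose $i$-th diagonal entry $\beta_i=n-\bar\beta_i$ is the number of indices $j$ with $L_{ij}=1$, $\bar\beta_i$ being the number of $j$ with $L_{ij}=0$), and let $\bar{\mathbf{L}}=\mathds{1}-\mathbf{L}$. Assume $\mathbf{D}_{\beta}+\bar{\mathbf{L}}$ is invertible. Then the problem $\min_{\mathbf{M}\in\mathcal{M}_T(n)}\|\mathbf{L}\circ(\tilde{\mathbf{M}}-\mathbf{M})\|_F^2$ has the closed-form solution $\mathbf{M}^\ast=(\mathbf{D}_{\beta}+\bar{\mathbf{L}})^{-1}\tilde{\mathbf{M}}_{\mathbf{L}}\mathds{1}+\mathds{1}\tilde{\mathbf{M}}_{\mathbf{L}}(\mathbf{D}_{\beta}+\bar{\mathbf{L}})^{-1}$.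
   Context: $\circ$ denotes the Hadamard (entrywise) product; $\mathds{1}$ is the $n\times n$ all-ones matrix; $\mathbf{I}$ is the identity; $\|\cdot\|_F$ is the Frobenius norm. A TDOA matrix is an $n\times n$ real matrix whose $(i,j)$ entry is $\tau_i-\tau_j$ for some $(\tau_1,\dots,\tau_n)\in\mathbb{R}^n$; $\mathcal{M}_T(n)$ is the set of all $n\times n$ TDOA matrices. The matrix $\mathbf{L}$ encodes which measurements are available: $L_{ij}=1$ if the TDOA between sensors $i$ and $j$ is known, $0$ otherwise. $\tilde{\mathbf{M}}$ is a noisy measured TDOA matrix (skew-symmetric). *)

From HB Require Import structures.
From mathcomp Require Import all_boot all_order all_algebra.
Set Implicit Arguments. Unset Strict Implicit. Unset Printing Implicit Defensive.
Import Order.TTheory GRing.Theory Num.Theory.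
Local Open Scope ring_scope.

Definition hadamard (R : pzRingType) (n : nat) (A B : 'M[R]_n) : 'M[R]_n :=
  \matrix_(i, j) (A i j * B i j).

Definition ones (R : pzRingType) (n : nat) : 'M[R]_n := const_mx 1.

Definition frob2 (R : pzRingType) (n : nat) (A : 'M[R]_n) : R :=
  \sum_(i < n) \sum_(j < n) (A i j) ^+ 2.

Definition is_TDOA (R : pzRingType) (n : nat) (M : 'M[R]_n) : Prop :=
  exists tau : 'I_n -> R, forall i j, M i j = tau i - tau j.

(* The candidate is Mstar = tdoa(tau) with tau the row sums of X^-1 (L o Mt),
   X = D_beta + Lbar: this uses only that X is symmetric and L o Mt is skew.
   Since Lbar = 1 - L, the equation X tau = (L o Mt) 1 says that every row sum
   of the residual W = L o (Mt - Mstar) equals sum_j tau_j; W is skew, so its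
   total sum vanishes and these constant row sums are all 0.  A matrix with
   vanishing row and column sums is orthogonal to L o tdoa(e) for every e, so
   for any TDOA matrix M Pythagoras gives
   ||L o (Mt - M)||^2 = ||W||^2 + ||L o (Mstar - M)||^2. *)

From HB Require Import structures.
From mathcomp Require Import all_boot all_order all_algebra.
From mathcomp Require Import ring.
Set Implicit Arguments. Unset Strict Implicit. Unset Printing Implicit Defensive.
Import Order.TTheory GRing.Theory Num.Theory.
Local Open Scope ring_scope.

Definition tdoa_mx (R : pzRingType) (n : nat) (tau : 'I_n -> R) : 'M[R]_n :=
  \matrix_(i, j) (tau i - tau j).

Lemma is_TDOA_tdoa_mx (R : pzRingType) (n : nat) (tau : 'I_n -> R) :
  is_TDOA (tdoa_mx tau).
Proof. by exists tau => i j; rewrite mxE. Qed.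

Lemma is_TDOA_eq_tdoa_mx (R : pzRingType) (n : nat) (M : 'M[R]_n) :
  is_TDOA M -> exists tau, M = tdoa_mx tau.
Proof. by move=> [tau Mtau]; exists tau; apply/matrixP => i j; rewrite mxE. Qed.

Lemma tdoa_mxB (R : pzRingType) (n : nat) (sigma tau : 'I_n -> R) :
  tdoa_mx sigma - tdoa_mx tau = tdoa_mx (fun i => sigma i - tau i).
Proof.
by apply/matrixP => i j; rewrite !mxE !opprB addrACA [in RHS]addrACA [- tau i + _]addrC.
Qed.

Lemma hadamardBr (R : pzRingType) (n : nat) (L A B : 'M[R]_n) :
  hadamard L (A - B) = hadamard L A - hadamard L B.
Proof. by apply/matrixP => i j; rewrite !mxE mulrBr. Qed.

Lemma trmx_hadamard (R : pzRingType) (n : nat) (A B : 'M[R]_n) :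
  (hadamard A B)^T = hadamard A^T B^T.
Proof. by apply/matrixP => i j; rewrite !mxE. Qed.

Lemma hadamard_sym_skew (R : pzRingType) (n : nat) (L A : 'M[R]_n) :
  L^T = L -> A^T = - A -> (hadamard L A)^T = - hadamard L A.
Proof.
by move=> Lsym Askew; apply/matrixP => i j; rewrite trmx_hadamard Lsym Askew !mxE mulrN.
Qed.

Lemma trmx_tdoa_mx (R : pzRingType) (n : nat) (tau : 'I_n -> R) :
  (tdoa_mx tau)^T = - tdoa_mx tau.
Proof. by apply/matrixP => i j; rewrite !mxE opprB. Qed.

Lemma mulmx_onesE (R : pzRingType) (n : nat) (A : 'M[R]_n) i j :
  (A *m ones R n) i j = \sum_k A i k.
Proof. by rewrite mxE; apply: eq_bigr => k _; rewrite mxE mulr1. Qed.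

Lemma tdoa_mx_sym_skew (R : comPzRingType) (n : nat) (Y A : 'M[R]_n) :
  Y^T = Y -> A^T = - A ->
  Y *m A *m ones R n + ones R n *m A *m Y
    = tdoa_mx (fun i => \sum_k (Y *m A) i k).
Proof.
move=> Ysym Askew.
have -> : ones R n *m A *m Y = - (Y *m A *m ones R n)^T.
  by rewrite !trmx_mul Ysym Askew /ones trmx_const mulNmx mulmxN opprK mulmxA.
apply/matrixP => i j; rewrite !mxE.
by congr (_ - _); apply: eq_bigr => k _; rewrite /ones [const_mx _ _ _]mxE mulr1.
Qed.

Lemma sum_skew_mx_eq0 (R : numDomainType) (n : nat) (A : 'M[R]_n) :
  A^T = - A -> \sum_i \sum_j A i j = 0.
Proof.
move=> Askew; set s := \sum_i _.
have s_opp : s = - s.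
  rewrite {1}/s exchange_big /s -sumrN; apply: eq_bigr => j _.
  rewrite -sumrN; apply: eq_bigr => i _.
  by move/matrixP/(_ j i): Askew; rewrite !mxE.
have : s *+ 2 == 0 by rewrite mulr2n {1}s_opp addNr.
by rewrite mulrn_eq0 => /eqP.
Qed.

Lemma skew_const_rowsum_eq0 (R : numDomainType) (n : nat) (A : 'M[R]_n) c (k : 'I_n) :
  A^T = - A -> (forall i, \sum_j A i j = c) -> c = 0.
Proof.
move=> /sum_skew_mx_eq0 + rowsum; rewrite (eq_bigr _ (fun i _ => rowsum i)).
have n_gt0 : (0 < n)%N := leq_ltn_trans (leq0n k) (ltn_ord k).
by rewrite sumr_const card_ord => /eqP; rewrite mulrn_eq0 (gtn_eqF n_gt0) => /eqP.
Qed.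

Lemma frob2_ge0 (R : realDomainType) (n : nat) (A : 'M[R]_n) : 0 <= frob2 A.
Proof. by apply: sumr_ge0 => i _; apply: sumr_ge0 => j _; apply: sqr_ge0. Qed.

Lemma frob2B (R : comPzRingType) (n : nat) (A B : 'M[R]_n) :
  frob2 (A - B) = frob2 A + frob2 B - (\sum_i \sum_j A i j * B i j) *+ 2.
Proof.
rewrite /frob2 -big_split /= -sumrMnl -sumrB; apply: eq_bigr => i _.
rewrite -big_split /= -sumrMnl -sumrB; apply: eq_bigr => j _.
by rewrite !mxE; ring.
Qed.

Lemma frob2_sub_hadamard_tdoa (R : comPzRingType) (n : nat) (L W : 'M[R]_n)
    (e : 'I_n -> R) :
  (forall i j, L i j * W i j = W i j) ->
  (forall i, \sum_j W i j = 0) -> (forall j, \sum_i W i j = 0) ->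
  frob2 (W - hadamard L (tdoa_mx e)) = frob2 W + frob2 (hadamard L (tdoa_mx e)).
Proof.
move=> LW row0 col0; rewrite frob2B.
suff -> : \sum_i \sum_j W i j * hadamard L (tdoa_mx e) i j = 0 by rewrite mul0rn subr0.
under eq_bigr => i _ do under eq_bigr => j _ do rewrite !mxE mulrCA mulrA LW mulrBr.
under eq_bigr => i _ do rewrite sumrB -mulr_suml row0 mul0r sub0r.
rewrite sumrN exchange_big.
by under eq_bigr => j _ do rewrite -mulr_suml col0 mul0r; rewrite big1 ?oppr0.
Qed.

Lemma frob2_hadamard_tdoa_min (R : realDomainType) (n : nat) (L Mt : 'M[R]_n)
    (tau : 'I_n -> R) :
  (forall i j, L i j * L i j = L i j) ->
  (forall i, \sum_j hadamard L (Mt - tdoa_mx tau) i j = 0) ->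
  (forall j, \sum_i hadamard L (Mt - tdoa_mx tau) i j = 0) ->
  forall M, is_TDOA M ->
    frob2 (hadamard L (Mt - tdoa_mx tau)) <= frob2 (hadamard L (Mt - M)).
Proof.
move=> Lidem row0 col0 M /is_TDOA_eq_tdoa_mx[sigma ->].
have -> : Mt - tdoa_mx sigma
        = Mt - tdoa_mx tau - tdoa_mx (fun i => sigma i - tau i).
  by rewrite -tdoa_mxB opprB addrA subrK.
rewrite (hadamardBr L (Mt - tdoa_mx tau)) frob2_sub_hadamard_tdoa ?lerDl ?frob2_ge0 //.
by move=> i j; rewrite mxE mulrA Lidem.
Qed.

(* The matrix D_beta + Lbar of the statement: the Laplacian of the measurement
   graph plus the all-ones matrix, which pins down the free shift of tau. *)
Definition normal_mx (R : pzRingType) (n : nat) (L : 'M[R]_n) : 'M[R]_n :=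
  hadamard 1%:M (L *m L^T) + (ones R n - L).

Lemma normal_mx_sym (R : comPzRingType) (n : nat) (L : 'M[R]_n) :
  L^T = L -> (normal_mx L)^T = normal_mx L.
Proof.
by move=> Lsym; rewrite /normal_mx linearD linearB /= trmx_hadamard trmx_mul trmxK
  tr_scalar_mx /ones trmx_const Lsym.
Qed.

Lemma sum_hadamard_scalar_mx (R : pzRingType) (n : nat) (B : 'M[R]_n)
    (F : 'I_n -> R) k :
  \sum_j hadamard 1%:M B k j * F j = B k k * F k.
Proof.
rewrite (bigD1 k) //= !mxE eqxx mul1r big1 ?addr0 // => j /negbTE jk.
by rewrite !mxE eq_sym jk mul0r mul0r.
Qed.

Lemma sum_normal_mx_mul (R : comPzRingType) (n : nat) (L : 'M[R]_n)
    (tau : 'I_n -> R) k :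
  (forall j, L k j * L k j = L k j) ->
  \sum_j normal_mx L k j * tau j
    = (\sum_j L k j) * tau k + \sum_j tau j - \sum_j L k j * tau j.
Proof.
move=> Lidem.
have diagE : (L *m L^T) k k = \sum_j L k j.
  by rewrite mxE; apply: eq_bigr => j _; rewrite mxE Lidem.
rewrite (eq_bigr (fun j => hadamard 1%:M (L *m L^T) k j * tau j + tau j
                           - L k j * tau j)); last first.
  by move=> j _; rewrite /normal_mx /ones !mxE; ring.
by rewrite sumrB big_split /= sum_hadamard_scalar_mx diagE.
Qed.

Lemma sum_hadamard_tdoa_residual (R : comPzRingType) (n : nat) (L Mt : 'M[R]_n)
    (tau : 'I_n -> R) k :
  (forall j, L k j * L k j = L k j) ->
  \sum_j hadamard L (Mt - tdoa_mx tau) k j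
    = \sum_j hadamard L Mt k j - \sum_j normal_mx L k j * tau j + \sum_j tau j.
Proof.
move=> Lidem; rewrite sum_normal_mx_mul // mulr_suml.
rewrite (eq_bigr (fun j => hadamard L Mt k j - L k j * tau k + L k j * tau j)).
  by rewrite big_split sumrB /=; ring.
by move=> j _; rewrite !mxE; ring.
Qed.

Theorem theorem4 (R : realFieldType) (n : nat) (Mt L : 'M[R]_n)
  (hMt : Mt^T = - Mt)
  (hLsym : L^T = L)
  (hL01 : forall i j, L i j = 0 \/ L i j = 1)
  (hLdiag : forall i, L i i = 1)
  (hinv : hadamard 1%:M (L *m L^T) + (ones R n - L) \in unitmx) :
  let MtL := hadamard L Mt in
  let Dbeta := hadamard 1%:M (L *m L^T) in
  let Lbar := ones R n - L in
  let Mstar := invmx (Dbeta + Lbar) *m MtL *m ones R n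
               + ones R n *m MtL *m invmx (Dbeta + Lbar) in
  is_TDOA Mstar /\
  forall M : 'M[R]_n, is_TDOA M ->
    frob2 (hadamard L (Mt - Mstar)) <= frob2 (hadamard L (Mt - M)).
Proof.
move=> MtL Dbeta Lbar Mstar; rewrite -/(normal_mx L) in hinv.
have Lidem i j : L i j * L i j = L i j by case: (hL01 i j) => ->; rewrite ?mulr0 ?mulr1.
set tau := fun i => \sum_k (invmx (normal_mx L) *m MtL) i k.
have -> : Mstar = tdoa_mx tau.
  apply: tdoa_mx_sym_skew; last exact: hadamard_sym_skew.
  by rewrite trmx_inv normal_mx_sym.
have normal_eq k : \sum_j normal_mx L k j * tau j = \sum_j MtL k j.
  have := congr1 (fun A : 'M[R]_n => A k k) (mulKVmx hinv (MtL *m ones R n)).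
  rewrite /= [LHS]mxE mulmx_onesE => <-.
  by apply: eq_bigr => j _; rewrite mulmxA mulmx_onesE.
set W := hadamard L (Mt - tdoa_mx tau).
have W_skew : W^T = - W.
  by apply: hadamard_sym_skew; rewrite // linearB /= hMt trmx_tdoa_mx opprD.
have W_rowsum k : \sum_j W k j = \sum_j tau j.
  by rewrite sum_hadamard_tdoa_residual // normal_eq subrr add0r.
have W_rowsum0 k : \sum_j W k j = 0.
  by rewrite W_rowsum; exact: skew_const_rowsum_eq0 W_skew W_rowsum.
have W_colsum0 j : \sum_i W i j = 0.
  transitivity (- \sum_i W j i); last by rewrite W_rowsum0 oppr0.
  rewrite -sumrN; apply: eq_bigr => i _.
  by move/matrixP/(_ j i): W_skew; rewrite !mxE.
split; [exact: is_TDOA_tdoa_mx | exact: frob2_hadamard_tdoa_min].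
Qed.
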